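(* Let $p>1$ and $x\in(0,1)$, and put $z=\left(\frac{x^p}{1+x^p}\right)^{1/p}$. Then $$z\left(1+\frac{\log(1+x^p)}{1+p}\right)<\operatorname{arsinh}_p x<z\left(1+\frac1p\log(1+x^p)\right)$$ and $$x\left(1-\frac{1}{1+p}\log(1-x^p)\right)<\operatorname{artanh}_p x<x\left(1-\frac1p\log(1-x^p)\right).$$
   Context: For $p>1$ and $x\in(0,1)$: $\operatorname{arsinh}_p x=\int_0^x(1+t^p)^{-1/p}\,dt$ and $\operatorname{artanh}_p x=\int_0^x(1-t^p)^{-1}\,dt$. *)

From Stdlib Require Import Reals.
From Coquelicot Require Import Coquelicot.
Open Scope R_scope.

Definition arsinh_p (p x : R) : R :=
  RInt (fun t => Rpower (1 + Rpower t p) (- (1 / p))) 0 x.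

Definition artanh_p (p x : R) : R :=
  RInt (fun t => / (1 - Rpower t p)) 0 x.

(* Both integrands have the form k (t^p) for a function k on [0,1), and
   d/dt [t * h (t^p)] = h (t^p) + p t^p h' (t^p).  Hence a pointwise
   comparison of k (u) with h (u) + p u h' (u) on (0,1) integrates to a
   comparison of the integral over [0,x] with x * h (x^p).  With
   h (u) = (1+u)^(-1/p) (1 + c ln (1+u)) resp. h (u) = 1 - c ln (1-u), the
   required pointwise inequalities reduce, for c = 1/(1+p) and c = 1/p, to
   ln (1+u) < u and 0 < ln (1+u) resp. -ln (1-u) < u/(1-u) and ln (1-u) < 0. *)

From Stdlib Require Import Reals Lra.
From Coquelicot Require Import Coquelicot.
Open Scope R_scope.

(* In Stdlib [Rpower 0 p = exp (p * ln 0) = 1], so [fun t => Rpower t p] is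
   not continuous at 0; [rpow0 p] agrees with it for t > 0 and vanishes on
   t <= 0. *)
Definition rpow0 (p t : R) : R := if Rlt_dec 0 t then Rpower t p else 0.

Lemma rpow0_pos p t : 0 < t -> rpow0 p t = Rpower t p.
Proof. intros Ht; unfold rpow0; destruct (Rlt_dec 0 t); [reflexivity | lra]. Qed.

Lemma rpow0_npos p t : t <= 0 -> rpow0 p t = 0.
Proof. intros Ht; unfold rpow0; destruct (Rlt_dec 0 t); [lra | reflexivity]. Qed.

Lemma Rpower_pos u p : 0 < Rpower u p.
Proof. apply exp_pos. Qed.

Lemma Rpower_lt_self u p : 1 < p -> 0 < u < 1 -> Rpower u p < u.
Proof.
  intros Hp Hu.
  assert (ln u < 0) by (rewrite <- ln_1; apply ln_increasing; lra).
  rewrite <- (exp_ln u) at 2 by lra.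
  apply exp_increasing; nra.
Qed.

Lemma rpow0_unit_interval p t : 1 < p -> 0 <= t < 1 -> 0 <= rpow0 p t < 1.
Proof.
  intros Hp Ht; destruct (Req_dec t 0) as [-> | Ht0].
  - rewrite rpow0_npos; lra.
  - rewrite rpow0_pos by lra.
    pose proof (Rpower_pos t p); pose proof (Rpower_lt_self t p Hp ltac:(lra)); lra.
Qed.

Lemma rpow0_abs_le p t : 1 < p -> Rabs t < 1 -> Rabs (rpow0 p t) <= Rabs t.
Proof.
  intros Hp Ht; destruct (Rlt_dec 0 t) as [Hpos | Hnpos].
  - apply Rabs_def2 in Ht.
    rewrite rpow0_pos, !Rabs_right by (try apply Rle_ge, Rlt_le, Rpower_pos; lra).
    apply Rlt_le, Rpower_lt_self; lra.
  - rewrite rpow0_npos, Rabs_R0 by lra; apply Rabs_pos.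
Qed.

Lemma is_derive_rpow0 p t : 0 < t -> is_derive (rpow0 p) t (p * Rpower t (p - 1)).
Proof.
  intros Ht; apply is_derive_Reals.
  apply (derivable_pt_lim_locally_ext (fun u => Rpower u p) _ t 0 (t + 1)); [lra | |].
  - intros u Hu; rewrite rpow0_pos by lra; reflexivity.
  - apply derivable_pt_lim_power; lra.
Qed.

Lemma continuous_rpow0 p t : 1 < p -> 0 <= t -> continuous (rpow0 p) t.
Proof.
  intros Hp Ht; destruct (Req_dec t 0) as [-> | Ht0].
  - apply continuity_pt_filterlim, continuity_pt_locally; intros eps.
    exists (mkposreal _ (Rmin_pos eps 1 (cond_pos eps) Rlt_0_1)); intros u Hu.
    change (Rabs (u - 0) < Rmin eps 1) in Hu; rewrite Rminus_0_r in Hu.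
    change (Rabs (rpow0 p u - rpow0 p 0) < eps).
    rewrite (rpow0_npos p 0), Rminus_0_r by lra.
    pose proof (Rmin_l eps 1); pose proof (Rmin_r eps 1).
    pose proof (rpow0_abs_le p u Hp ltac:(lra)); lra.
  - apply (ex_derive_continuous (K := R_AbsRing) (rpow0 p)).
    eexists; apply is_derive_rpow0; lra.
Qed.

Lemma rpow0_scale p t : 0 < t -> t * (p * Rpower t (p - 1)) = p * rpow0 p t.
Proof.
  intros Ht; rewrite rpow0_pos by lra.
  replace (Rpower t p) with (Rpower t (1 + (p - 1))) by (f_equal; ring).
  rewrite Rpower_plus, Rpower_1 by lra; ring.
Qed.

Lemma is_derive_id_mul_0 (g : R -> R) :
  continuous g 0 -> is_derive (fun t => t * g t) 0 (g 0).
Proof.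
  intros Hg; apply is_derive_Reals.
  apply continuity_pt_filterlim in Hg; rewrite continuity_pt_locally in Hg.
  intros eps Heps; destruct (Hg (mkposreal eps Heps)) as [d Hd].
  exists d; intros e He0 Hed.
  replace (((0 + e) * g (0 + e) - 0 * g 0) / e - g 0) with (g e - g 0)
    by (rewrite Rplus_0_l; field; exact He0).
  apply (Hd e); change (Rabs (e - 0) < d); rewrite Rminus_0_r; exact Hed.
Qed.

Section PowerSubstitution.

Variables (p : R) (h h' : R -> R).
Hypotheses (Hp : 1 < p)
  (Hh : forall u, 0 <= u < 1 -> is_derive h u (h' u))
  (Hh' : forall u, 0 <= u < 1 -> continuous h' u).

Let dh (t : R) := h (rpow0 p t) + p * rpow0 p t * h' (rpow0 p t).

Lemma continuous_h u : 0 <= u < 1 -> continuous h u.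
Proof.
  intros Hu; apply (ex_derive_continuous (K := R_AbsRing) h); eexists; apply Hh, Hu.
Qed.

Lemma continuous_comp_rpow0 (k : R -> R) t :
  (forall u, 0 <= u < 1 -> continuous k u) -> 0 <= t < 1 ->
  continuous (fun t => k (rpow0 p t)) t.
Proof.
  intros Hk Ht; apply (continuous_comp (rpow0 p) k).
  - apply continuous_rpow0; lra.
  - apply Hk, rpow0_unit_interval; lra.
Qed.

Lemma continuous_dh t : 0 <= t < 1 -> continuous dh t.
Proof.
  intros Ht; unfold dh.
  apply (continuous_plus (fun t => h (rpow0 p t))).
  { apply continuous_comp_rpow0; [exact continuous_h | exact Ht]. }
  apply (continuous_mult (fun t => p * rpow0 p t)).
  - apply (continuous_mult (fun _ => p)); [apply continuous_const |].
    apply continuous_rpow0; lra.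
  - apply continuous_comp_rpow0; [exact Hh' | exact Ht].
Qed.

Lemma is_derive_id_mul_comp_rpow0 t :
  0 <= t < 1 -> is_derive (fun t => t * h (rpow0 p t)) t (dh t).
Proof.
  intros Ht; unfold dh; destruct (Req_dec t 0) as [-> | Ht0].
  - rewrite rpow0_npos, Rmult_0_r, Rmult_0_l, Rplus_0_r by lra.
    rewrite <- (rpow0_npos p 0) at 2 by lra.
    apply is_derive_id_mul_0, continuous_comp_rpow0; [exact continuous_h | lra].
  - pose proof (rpow0_unit_interval p t Hp ltac:(lra)).
    evar (l : R).
    assert (Hl : is_derive (fun t => t * h (rpow0 p t)) t l).
    { apply (is_derive_mult (fun t => t) (fun t => h (rpow0 p t)));
        [apply is_derive_id | | intros; apply Rmult_comm].
      apply (is_derive_comp h (rpow0 p)); [apply Hh; lra | apply is_derive_rpow0; lra]. }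
    replace (h (rpow0 p t) + p * rpow0 p t * h' (rpow0 p t)) with l; [exact Hl |].
    unfold l, plus, mult, one, scal; simpl; unfold mult; simpl.
    rewrite <- (rpow0_scale p t) by lra; ring.
Qed.

Lemma RInt_dh x : 0 < x < 1 -> RInt dh 0 x = x * h (rpow0 p x).
Proof.
  intros Hx; apply is_RInt_unique.
  replace (x * h (rpow0 p x)) with (minus (x * h (rpow0 p x)) (0 * h (rpow0 p 0)))
    by (unfold minus, plus, opp; simpl; ring).
  apply (is_RInt_derive (fun t => t * h (rpow0 p t)));
    intros t Ht; rewrite Rmin_left, Rmax_right in Ht by lra.
  - apply is_derive_id_mul_comp_rpow0; lra.
  - apply continuous_dh; lra.
Qed.

Variables (k : R -> R) (x : R).
Hypotheses (Hk : forall u, 0 <= u < 1 -> continuous k u) (Hx : 0 < x < 1).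

Lemma RInt_comp_rpow0_lt :
  (forall u, 0 < u < 1 -> k u < h u + p * u * h' u) ->
  RInt (fun t => k (rpow0 p t)) 0 x < x * h (rpow0 p x).
Proof.
  intros Hlt; rewrite <- RInt_dh by exact Hx.
  apply RInt_lt; try lra.
  - intros t Ht; apply continuous_dh; lra.
  - intros t Ht; apply continuous_comp_rpow0; [exact Hk | lra].
  - intros t Ht; apply Hlt.
    rewrite rpow0_pos by lra; pose proof (Rpower_pos t p).
    pose proof (Rpower_lt_self t p Hp ltac:(lra)); lra.
Qed.

Lemma RInt_comp_rpow0_gt :
  (forall u, 0 < u < 1 -> h u + p * u * h' u < k u) ->
  x * h (rpow0 p x) < RInt (fun t => k (rpow0 p t)) 0 x.
Proof.
  intros Hgt; rewrite <- RInt_dh by exact Hx.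
  apply RInt_lt; try lra.
  - intros t Ht; apply continuous_comp_rpow0; [exact Hk | lra].
  - intros t Ht; apply continuous_dh; lra.
  - intros t Ht; apply Hgt.
    rewrite rpow0_pos by lra; pose proof (Rpower_pos t p).
    pose proof (Rpower_lt_self t p Hp ltac:(lra)); lra.
Qed.

End PowerSubstitution.

Lemma RInt_comp_Rpower (f : R -> R) p x :
  0 < x -> RInt (fun t => f (Rpower t p)) 0 x = RInt (fun t => f (rpow0 p t)) 0 x.
Proof.
  intros Hx; apply RInt_ext; intros t Ht.
  rewrite Rmin_left, Rmax_right in Ht by lra.
  rewrite rpow0_pos by lra; reflexivity.
Qed.

Lemma ln_1_plus_lt u : 0 < u -> ln (1 + u) < u.
Proof.
  intros Hu; rewrite <- (ln_exp u) at 2.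
  apply ln_increasing; [lra | apply exp_ineq1; lra].
Qed.

Lemma ln_1_plus_pos u : 0 < u -> 0 < ln (1 + u).
Proof. intros Hu; rewrite <- ln_1; apply ln_increasing; lra. Qed.

Lemma Ropp_ln_1_minus_lt u : 0 < u < 1 -> - ln (1 - u) < u / (1 - u).
Proof.
  intros Hu; rewrite <- ln_Rinv by lra.
  replace (/ (1 - u)) with (1 + u / (1 - u)) by (field; lra).
  apply ln_1_plus_lt, Rdiv_lt_0_compat; lra.
Qed.

Lemma ln_1_minus_neg u : 0 < u < 1 -> ln (1 - u) < 0.
Proof. intros Hu; rewrite <- ln_1; apply ln_increasing; lra. Qed.

Section Bounds.

Variables (p x : R).
Hypotheses (Hp : 1 < p) (Hx : 0 < x < 1).

Let ks (u : R) := Rpower (1 + u) (- (1 / p)).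
Let hs (c u : R) := Rpower (1 + u) (- (1 / p)) * (1 + c * ln (1 + u)).
Let hs' (c u : R) :=
  Rpower (1 + u) (- (1 / p)) / (1 + u) * (c - 1 / p * (1 + c * ln (1 + u))).

Let kt (u : R) := / (1 - u).
Let ht (c u : R) := 1 - c * ln (1 - u).
Let ht' (c u : R) := c / (1 - u).

Lemma is_derive_hs c u : -1 < u -> is_derive (hs c) u (hs' c u).
Proof. intros Hu; unfold hs, hs', Rpower; auto_derive; [lra | field; lra]. Qed.

Lemma continuous_hs' c u : -1 < u -> continuous (hs' c) u.
Proof.
  intros Hu; apply (ex_derive_continuous (K := R_AbsRing) (hs' c)).
  unfold hs', Rpower; auto_derive; lra.
Qed.

Lemma continuous_ks u : -1 < u -> continuous ks u.
Proof.
  intros Hu; apply (ex_derive_continuous (K := R_AbsRing) ks).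
  unfold ks, Rpower; auto_derive; lra.
Qed.

Lemma is_derive_ht c u : u < 1 -> is_derive (ht c) u (ht' c u).
Proof. intros Hu; unfold ht, ht'; auto_derive; [lra | field; lra]. Qed.

Lemma continuous_ht' c u : u < 1 -> continuous (ht' c) u.
Proof.
  intros Hu; apply (ex_derive_continuous (K := R_AbsRing) (ht' c)).
  unfold ht'; auto_derive; lra.
Qed.

Lemma continuous_kt u : u < 1 -> continuous kt u.
Proof.
  intros Hu; apply (ex_derive_continuous (K := R_AbsRing) kt).
  unfold kt; auto_derive; lra.
Qed.

Lemma hs_euler c u : -1 < u ->
  hs c u + p * u * hs' c u = ks u / (1 + u) * (1 + c * ln (1 + u) + p * c * u).
Proof. intros Hu; unfold hs, hs', ks; field; lra. Qed.

Lemma arsinh_p_eq_RInt : arsinh_p p x = RInt (fun t => ks (rpow0 p t)) 0 x.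
Proof. apply (RInt_comp_Rpower ks); lra. Qed.

Lemma artanh_p_eq_RInt : artanh_p p x = RInt (fun t => kt (rpow0 p t)) 0 x.
Proof. apply (RInt_comp_Rpower kt); lra. Qed.

Lemma arsinh_p_gt_hs c :
  (forall u, 0 < u < 1 -> 1 + c * ln (1 + u) + p * c * u < 1 + u) ->
  x * hs c (Rpower x p) < arsinh_p p x.
Proof.
  intros Hc; rewrite arsinh_p_eq_RInt, <- (rpow0_pos p x) by lra.
  apply (RInt_comp_rpow0_gt p (hs c) (hs' c)); try lra.
  - intros u Hu; apply is_derive_hs; lra.
  - intros u Hu; apply continuous_hs'; lra.
  - intros u Hu; apply continuous_ks; lra.
  - intros u Hu; rewrite hs_euler by lra.
    replace (ks u) with (ks u / (1 + u) * (1 + u)) at 2 by (field; lra).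
    apply Rmult_lt_compat_l; [apply Rdiv_lt_0_compat; [apply Rpower_pos | lra] |].
    exact (Hc u Hu).
Qed.

Lemma arsinh_p_lt_hs c :
  (forall u, 0 < u < 1 -> 1 + u < 1 + c * ln (1 + u) + p * c * u) ->
  arsinh_p p x < x * hs c (Rpower x p).
Proof.
  intros Hc; rewrite arsinh_p_eq_RInt, <- (rpow0_pos p x) by lra.
  apply (RInt_comp_rpow0_lt p (hs c) (hs' c)); try lra.
  - intros u Hu; apply is_derive_hs; lra.
  - intros u Hu; apply continuous_hs'; lra.
  - intros u Hu; apply continuous_ks; lra.
  - intros u Hu; rewrite hs_euler by lra.
    replace (ks u) with (ks u / (1 + u) * (1 + u)) at 1 by (field; lra).
    apply Rmult_lt_compat_l; [apply Rdiv_lt_0_compat; [apply Rpower_pos | lra] |].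
    exact (Hc u Hu).
Qed.

Lemma artanh_p_gt_ht c :
  (forall u, 0 < u < 1 -> 1 - c * ln (1 - u) + p * u * (c / (1 - u)) < / (1 - u)) ->
  x * ht c (Rpower x p) < artanh_p p x.
Proof.
  intros Hc; rewrite artanh_p_eq_RInt, <- (rpow0_pos p x) by lra.
  apply (RInt_comp_rpow0_gt p (ht c) (ht' c)); try lra.
  - intros u Hu; apply is_derive_ht; lra.
  - intros u Hu; apply continuous_ht'; lra.
  - intros u Hu; apply continuous_kt; lra.
  - exact Hc.
Qed.

Lemma artanh_p_lt_ht c :
  (forall u, 0 < u < 1 -> / (1 - u) < 1 - c * ln (1 - u) + p * u * (c / (1 - u))) ->
  artanh_p p x < x * ht c (Rpower x p).
Proof.
  intros Hc; rewrite artanh_p_eq_RInt, <- (rpow0_pos p x) by lra.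
  apply (RInt_comp_rpow0_lt p (ht c) (ht' c)); try lra.
  - intros u Hu; apply is_derive_ht; lra.
  - intros u Hu; apply continuous_ht'; lra.
  - intros u Hu; apply continuous_kt; lra.
  - exact Hc.
Qed.

Lemma arsinh_p_lower :
  x * Rpower (1 + Rpower x p) (- (1 / p)) * (1 + ln (1 + Rpower x p) / (1 + p))
  < arsinh_p p x.
Proof.
  replace (_ * _ * _) with (x * hs (1 / (1 + p)) (Rpower x p))
    by (unfold hs; field; lra).
  apply arsinh_p_gt_hs; intros u Hu.
  replace (1 + 1 / (1 + p) * ln (1 + u) + p * (1 / (1 + p)) * u)
    with (1 + u + (ln (1 + u) - u) / (1 + p)) by (field; lra).
  pose proof (ln_1_plus_lt u ltac:(lra)).
  enough ((ln (1 + u) - u) / (1 + p) < 0) by lra.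
  apply Rdiv_neg_pos; lra.
Qed.

Lemma arsinh_p_upper :
  arsinh_p p x
  < x * Rpower (1 + Rpower x p) (- (1 / p)) * (1 + 1 / p * ln (1 + Rpower x p)).
Proof.
  replace (_ * _ * _) with (x * hs (1 / p) (Rpower x p)) by (unfold hs; ring).
  apply arsinh_p_lt_hs; intros u Hu.
  replace (1 + 1 / p * ln (1 + u) + p * (1 / p) * u)
    with (1 + u + ln (1 + u) / p) by (field; lra).
  pose proof (ln_1_plus_pos u ltac:(lra)).
  enough (0 < ln (1 + u) / p) by lra.
  apply Rdiv_lt_0_compat; lra.
Qed.

Lemma artanh_p_lower :
  x * (1 - 1 / (1 + p) * ln (1 - Rpower x p)) < artanh_p p x.
Proof.
  apply (artanh_p_gt_ht (1 / (1 + p))); intros u Hu.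
  replace (1 - 1 / (1 + p) * ln (1 - u) + p * u * (1 / (1 + p) / (1 - u)))
    with (/ (1 - u) + (- ln (1 - u) - u / (1 - u)) / (1 + p)) by (field; lra).
  pose proof (Ropp_ln_1_minus_lt u Hu).
  enough ((- ln (1 - u) - u / (1 - u)) / (1 + p) < 0) by lra.
  apply Rdiv_neg_pos; lra.
Qed.

Lemma artanh_p_upper :
  artanh_p p x < x * (1 - 1 / p * ln (1 - Rpower x p)).
Proof.
  apply (artanh_p_lt_ht (1 / p)); intros u Hu.
  replace (1 - 1 / p * ln (1 - u) + p * u * (1 / p / (1 - u)))
    with (/ (1 - u) + - ln (1 - u) / p) by (field; lra).
  pose proof (ln_1_minus_neg u Hu).
  enough (0 < - ln (1 - u) / p) by lra.
  apply Rdiv_lt_0_compat; lra.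
Qed.

End Bounds.

Lemma Rpower_ratio_inv_pow p x : 0 < p -> 0 < x ->
  Rpower (Rpower x p / (1 + Rpower x p)) (1 / p)
  = x * Rpower (1 + Rpower x p) (- (1 / p)).
Proof.
  intros Hp Hx; pose proof (Rpower_pos x p).
  unfold Rpower at 1; rewrite ln_div by lra.
  unfold Rpower at 1; rewrite ln_exp.
  transitivity (exp (ln x + - (1 / p) * ln (1 + Rpower x p))).
  - f_equal; field; lra.
  - rewrite exp_plus, exp_ln by lra; reflexivity.
Qed.

Theorem theorem1p2 (p x : R) (hp : 1 < p) (hx0 : 0 < x) (hx1 : x < 1) :
  let z := Rpower (Rpower x p / (1 + Rpower x p)) (1 / p) in
  (z * (1 + ln (1 + Rpower x p) / (1 + p)) < arsinh_p p x /\
   arsinh_p p x < z * (1 + (1 / p) * ln (1 + Rpower x p))) /\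
  (x * (1 - (1 / (1 + p)) * ln (1 - Rpower x p)) < artanh_p p x /\
   artanh_p p x < x * (1 - (1 / p) * ln (1 - Rpower x p))).
Proof.
  intros z; unfold z; rewrite Rpower_ratio_inv_pow by lra.
  assert (Hx : 0 < x < 1) by lra.
  split; split.
  - exact (arsinh_p_lower p x hp Hx).
  - exact (arsinh_p_upper p x hp Hx).
  - exact (artanh_p_lower p x hp Hx).
  - exact (artanh_p_upper p x hp Hx).
Qed.
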